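(* Let $X$ be a BN with full support on the DAG $\mathcal G$ with states $\mathcal A$, $f:\mathcal A\to\mathcal B$ a surjection and $U_v=f(X_v)$. Suppose that for all $v\in V_p$, all $w,\tilde w\in\mathcal A^{pa(v)}$ with $f(w)=f(\tilde w)$ and all $b\in\mathcal B$, $$\mathbb P(U_v=b\mid X_{pa(v)}=w)=\mathbb P(U_v=b\mid X_{pa(v)}=\tilde w).$$ Then (D3) holds, and for every $v$ with $depth(v)\ge1$, every $w\in\mathcal A^{pa(v)}$, every $b\in\mathcal B$ and every initial distribution $\alpha$ with $\mathbb P_\alpha(U_{pa(v)}=f(w))>0$, $$\mathbb P_\alpha(U_v=b\mid U_{pa(v)}=f(w))=\mathbb P(U_v=b\mid X_{pa(v)}=w).$$
   Context: $\mathcal G=(V,E)$ is a finite DAG; $pa(v)$ parents; $V_s$ parentless vertices, $V_p=V\setminus V_s$; $depth(v)$ maximal number of edges of a directed path from a vertex of $V_s$ to $v$. A BN on $\mathcal G$ with states $\mathcal A$ (finite) is specified by distributions $\alpha_v$ on $\mathcal A$ for $v\in V_s$ and CPDs $P_v(\cdot\mid a_{pa(v)})$ for $v\in V_p$; law $\prod_{v\in V_s}\alpha_v(x_v)\prod_{v\in V_p}P_v(x_v\mid x_{pa(v)})$; full support: all $x\in\mathcal A^V$ have positive probability (so $\mathbb P(X_v=c\mid X_{pa(v)}=w)=P_v(c\mid w)$, and $\mathbb P(U_v=b\mid X_{pa(v)}=w)=\sum_{c\in f^{-1}(b)}P_v(c\mid w)$). $\mathbb P_\alpha$ is the law with the same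 CPDs and initial distribution $\alpha$. $f$ applied coordinatewise. (D3): for every initial distribution $\tilde\alpha$, $(U_v)$ under $\mathbb P_{\tilde\alpha}$ factorises over $\mathcal G$ (law of form $\prod_vq_v(u_v\mid u_{pa(v)})$), and for every $v\in V_p$, $b_v$, $b_{pa(v)}$ the value $\mathbb P_{\tilde\alpha}(U_v=b_v\mid U_{pa(v)}=b_{pa(v)})$ is the same for all $\tilde\alpha$ with $\mathbb P_{\tilde\alpha}(U_{pa(v)}=b_{pa(v)})>0$. *)

From mathcomp Require Import all_boot all_order all_algebra.
Set Implicit Arguments. Unset Strict Implicit. Unset Printing Implicit Defensive.
Import Order.TTheory GRing.Theory Num.Theory.
Local Open Scope ring_scope.

Section BN.
Variables (R : realFieldType) (V A : finType).

Definition edge (pa : V -> {set V}) : rel V := fun a b => a \in pa b.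

Definition acyclic (pa : V -> {set V}) : Prop :=
  forall u v, u \in pa v -> ~~ connect (edge pa) v u.

(* V_p : vertices with at least one parent; V_s : parentless vertices *)
Definition is_src (pa : V -> {set V}) (v : V) : bool := pa v == set0.

(* A CPD P v x c = P_v(c | x_{pa(v)}); only the parent coordinates of x matter *)
Definition cpd_family (pa : V -> {set V}) (P : V -> {ffun V -> A} -> A -> R) : Prop :=
  forall v, ~~ is_src pa v ->
    [/\ forall x y : {ffun V -> A}, (forall u, u \in pa v -> x u = y u) ->
          forall c, P v x c = P v y c,
        forall x c, 0 <= P v x c
      & forall x, \sum_(c : A) P v x c = 1].

Definition init_distr (pa : V -> {set V}) (alpha : V -> A -> R) : Prop :=
  forall v, is_src pa v ->
    (forall c, 0 <= alpha v c) /\ \sum_(c : A) alpha v c = 1.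

Definition bn_law (pa : V -> {set V}) (alpha : V -> A -> R)
  (P : V -> {ffun V -> A} -> A -> R) (x : {ffun V -> A}) : R :=
  (\prod_(v | is_src pa v) alpha v (x v)) *
  (\prod_(v | ~~ is_src pa v) P v x (x v)).

Definition prob (p : {ffun V -> A} -> R) (E : pred {ffun V -> A}) : R :=
  \sum_(x | E x) p x.

Definition condprob (p : {ffun V -> A} -> R) (E F : pred {ffun V -> A}) : R :=
  prob p [pred x | E x && F x] / prob p F.

Variables (B : finType) (f : A -> B).

Definition Xpa_eq (pa : V -> {set V}) (v : V) (w : {ffun V -> A}) : pred {ffun V -> A} :=
  fun x => [forall u in pa v, x u == w u].
Definition Upa_eq (pa : V -> {set V}) (v : V) (bb : {ffun V -> B}) : pred {ffun V -> A} :=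
  fun x => [forall u in pa v, f (x u) == bb u].
Definition Uv_eq (v : V) (b : B) : pred {ffun V -> A} := fun x => f (x v) == b.
Definition U_eq (bb : {ffun V -> B}) : pred {ffun V -> A} :=
  fun x => [forall u, f (x u) == bb u].

Definition fimg (w : {ffun V -> A}) : {ffun V -> B} := [ffun u => f (w u)].

Definition U_factorises (pa : V -> {set V}) (p : {ffun V -> A} -> R) : Prop :=
  exists q : V -> {ffun V -> B} -> B -> R,
    [/\ forall v (bb bb' : {ffun V -> B}), (forall u, u \in pa v -> bb u = bb' u) ->
          forall b, q v bb b = q v bb' b,
        forall v bb b, 0 <= q v bb b,
        forall v bb, \sum_(b : B) q v bb b = 1
      & forall bb : {ffun V -> B}, prob p (U_eq bb) = \prod_(v : V) q v bb (bb v)].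

Definition D3 (pa : V -> {set V}) (P : V -> {ffun V -> A} -> A -> R) : Prop :=
  (forall alpha, init_distr pa alpha -> U_factorises pa (bn_law pa alpha P)) /\
  (forall alpha1 alpha2, init_distr pa alpha1 -> init_distr pa alpha2 ->
     forall v, ~~ is_src pa v -> forall (bv : B) (bpa : {ffun V -> B}),
       0 < prob (bn_law pa alpha1 P) (Upa_eq pa v bpa) ->
       0 < prob (bn_law pa alpha2 P) (Upa_eq pa v bpa) ->
       condprob (bn_law pa alpha1 P) (Uv_eq v bv) (Upa_eq pa v bpa) =
       condprob (bn_law pa alpha2 P) (Uv_eq v bv) (Upa_eq pa v bpa)).

End BN.

From mathcomp Require Import all_boot all_order all_algebra.
Set Implicit Arguments. Unset Strict Implicit. Unset Printing Implicit Defensive.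
Import Order.TTheory GRing.Theory Num.Theory.
Local Open Scope ring_scope.

(** Write [Q_v(b | x) = sum_{c in f^-1 b} P_v(c | x)] for the aggregated CPD;
    by hypothesis it depends on [x] only through [f] of the parents of [v].
    Probabilities of events that constrain each coordinate separately are sums
    of products of local kernels, and such sums can be evaluated by summing out
    a descendant-closed set of vertices, always removing one that has no parent
    in the remaining set: each summed-out vertex contributes its normalisation
    constant.  Applied to the descendants of [v], this gives
    [P_alpha(U_v = b, U_pa(v) = f w) = Q_v(b | w) P_alpha(U_pa(v) = f w)] for
    every initial distribution [alpha]; applied to all vertices with the
    constraints [f(X_u) = b_u] it gives the factorisation of the law of [U]. *)

Section Coordinates.
Variables (V A : finType).
Implicit Types (x : {ffun V -> A}) (v : V) (c : A) (e : V -> pred A).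

Definition upd x v c : {ffun V -> A} := [ffun u => if u == v then c else x u].

Lemma upd_same x v c : upd x v c v = c.
Proof. by rewrite ffunE eqxx. Qed.

Lemma upd_other x v c u : u != v -> upd x v c u = x u.
Proof. by rewrite ffunE => /negbTE ->. Qed.

Lemma upd_upd x v c c' : upd (upd x v c) v c' = upd x v c'.
Proof. by apply/ffunP => u; rewrite !ffunE; case: eqP. Qed.

Lemma upd_eq x v c : (upd x v c == x) = (x v == c).
Proof.
apply/eqP/eqP => [/ffunP/(_ v)|<-]; first by rewrite upd_same.
by apply/ffunP => u; rewrite ffunE; case: eqP => [->|].
Qed.

Lemma sum_by_coord (R : nmodType) (F : {ffun V -> A} -> R) (S : pred {ffun V -> A}) v a :
  (forall x c, S (upd x v c) = S x) ->
  \sum_(x | S x) F x = \sum_(x | S x && (x v == a)) \sum_c F (upd x v c).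
Proof.
move=> S_upd; rewrite [RHS]exchange_big (partition_big (fun x => x v) predT) //=.
apply: eq_bigr => c _.
rewrite (reindex_onto (fun x => upd x v c) (fun y => upd y v a)) /=; last first.
  by move=> y /andP[_ yv]; rewrite upd_upd; apply/eqP; rewrite upd_eq.
by apply: eq_bigl => x; rewrite S_upd upd_same eqxx upd_upd upd_eq andbT.
Qed.

Lemma forall_in_coord (D : {set V}) e x :
  [forall u in D, e u (x u)] = [forall u, (if u \in D then e u else predT) (x u)].
Proof.
apply/forall_inP/forallP => xe u; first by case: ifPn => // /xe.
by move=> uD; have := xe u; rewrite uD.
Qed.

Lemma forall_coord_at v (S : pred A) e x : e v =1 predT ->
  S (x v) && [forall u, e u (x u)] = [forall u, (if u == v then S else e u) (x u)].
Proof.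
move=> ev; apply/andP/forallP => [[Sx /forallP xe] u | xe].
  by case: eqP => [->|].
split; first by have := xe v; rewrite eqxx.
by apply/forallP => u; have := xe u; case: eqP => [->|//]; rewrite ev.
Qed.

End Coordinates.

Lemma prodr_nat_bool (R : comPzSemiRingType) (I : finType) (b : pred I) :
  \prod_i ((b i)%:R : R) = [forall i, b i]%:R.
Proof.
have [/forallP b_all|/forallPn[i /negbTE bi]] := boolP [forall i, b i].
  by rewrite big1 // => i _; rewrite b_all.
by rewrite (bigD1 i) //= bi mul0r.
Qed.

Section Elimination.
Variables (V A : finType) (pa : V -> {set V}).
Hypothesis acyc : acyclic pa.

Lemma notin_pa v : v \notin pa v.
Proof. by apply/negP => /acyc; rewrite connect0. Qed.

Lemma in_pa_neq u v : u \in pa v -> u != v.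
Proof. by apply: contraTneq => ->; apply: notin_pa. Qed.

Lemma desc_notin_pa v u : connect (edge pa) v u -> u \notin pa v.
Proof. by move=> vu; apply/negP => /acyc; rewrite vu. Qed.

Definition desc_closed (D : {set V}) := forall u p, p \in pa u -> p \in D -> u \in D.

Lemma desc_closed_desc v : desc_closed [set u | connect (edge pa) v u].
Proof. by move=> u p p_pa; rewrite !inE => /connect_trans; apply; apply: connect1. Qed.

Definition pa_local (R : Type) (K : V -> {ffun V -> A} -> R) :=
  forall u (x y : {ffun V -> A}),
    x u = y u -> (forall p, p \in pa u -> x p = y p) -> K u x = K u y.

(* A vertex of [D] with the fewest ancestors has none of its parents in [D]. *)
Lemma ex_parentless_in (D : {set V}) v0 :
  v0 \in D -> exists2 v, v \in D & forall p, p \in pa v -> p \notin D.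
Proof.
move=> v0D; pose anc v := [set u | connect (edge pa) u v].
have [v vD v_min] := arg_minnP (fun v => #|anc v|) v0D.
exists v => // p p_pa; apply/negP => pD.
have := v_min p pD; rewrite leqNgt => /negP; apply; apply: proper_card.
apply/properP; split.
  by apply/subsetP => u; rewrite !inE => /connect_trans; apply; apply: connect1.
by exists v; rewrite inE ?connect0 //; apply: acyc.
Qed.

Lemma sum_prod_elim (R : comPzSemiRingType) (K : V -> {ffun V -> A} -> R)
    (s : V -> R) (x0 : {ffun V -> A}) (D : {set V}) :
  pa_local K -> desc_closed D ->
  (forall v x, v \in D -> (forall p, p \in pa v -> K p x != 0) ->
     \sum_(c : A) K v (upd x v c) = s v) ->
  \sum_(x : {ffun V -> A}) \prod_u K u x =
  \prod_(u in D) s u *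
    \sum_(x : {ffun V -> A} | [forall u in D, x u == x0 u]) \prod_(u | u \notin D) K u x.
Proof.
move=> K_loc; have [n] := ubnP #|D|; elim: n D => // n IH D ltD D_cl sumK.
have [->|[v0 v0D]] := set_0Vmem D.
  rewrite big_set0 mul1r; apply: eq_big => [x|x _].
    by apply/esym/forall_inP => u; rewrite inE.
  by apply: eq_bigl => u; rewrite inE.
have [v vD v_min] := ex_parentless_in v0D.
set D' := D :\ v.
have D'_cl : desc_closed D'.
  move=> u p p_pa; rewrite !inE => /andP[pv pD]; rewrite (D_cl u p) // andbT.
  by apply: contraTneq p_pa => ->; apply: contraL pD; apply: v_min.
have ltD' : (#|D'| < n)%N by move: ltD; rewrite (cardsD1 v D) vD.
rewrite (IH D') // => [|u x /setD1P[_ uD]]; last exact: sumK.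
rewrite (big_setD1 _ vD) -mulrA mulrCA; congr (_ * _).
pose H x := \prod_(u | u \notin D) K u x.
have H_upd x c : H (upd x v c) = H x.
  apply: eq_bigr => u uD; have uv : u != v by apply: contraNneq uD => ->.
  apply: K_loc => [|p p_pa]; first by rewrite upd_other.
  by rewrite upd_other //; apply: contraNneq uD => pv; apply: (D_cl u p) => //; rewrite pv.
have splitK x : \prod_(u | u \notin D') K u x = K v x * H x.
  rewrite (bigD1 v) ?inE ?eqxx //=; congr (_ * _); apply: eq_bigl => u.
  by rewrite !inE negb_and negbK; case: eqP => [->|_]; rewrite ?vD ?andbT.
under eq_bigr do rewrite splitK.
rewrite (@sum_by_coord _ _ _ _ _ v (x0 v)) => [|x c]; last first.
  by apply/forall_inP/forall_inP => agr u uD; have := agr u uD;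
    rewrite upd_other //; apply: contraTneq uD => ->; rewrite !inE eqxx.
rewrite mulr_sumr; apply: eq_big => [x|x _].
  apply/andP/forall_inP => [[/forall_inP agr xv] u uD | agr].
    by case: (eqVneq u v) => [->//|uv]; apply: agr; rewrite !inE uv.
  by split; [apply/forall_inP => u /setD1P[_ /agr]|apply: agr].
rewrite -/(H x); under eq_bigr => c _ do rewrite (H_upd x c).
rewrite -mulr_suml.
have [->|Hn0] := eqVneq (H x) 0; first by rewrite !mulr0.
congr (_ * _); apply: sumK => // p p_pa; apply: contraNneq Hn0 => Kp0.
by rewrite /H (bigD1 p) ?v_min //= Kp0 mul0r.
Qed.

End Elimination.

Lemma prob_gt0 (R : realFieldType) (V A : finType) (p : {ffun V -> A} -> R)
    (E : pred {ffun V -> A}) x :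
  (forall y, 0 < p y) -> E x -> 0 < prob p E.
Proof.
move=> p_gt0 Ex; rewrite /prob (bigD1 x) //=.
by apply: ltr_pwDl => //; apply: sumr_ge0 => y _; apply: ltW.
Qed.

Lemma prob_neq0_ex (R : realFieldType) (V A : finType) (p : {ffun V -> A} -> R)
    (E : pred {ffun V -> A}) :
  prob p E != 0 -> exists x, E x.
Proof.
move=> pE; apply/existsP; apply: contraNT pE => /existsPn E0.
by rewrite /prob big_pred0 // => x; apply/negbTE/E0.
Qed.

Section BayesNet.
Variables (R : realFieldType) (V A : finType) (pa : V -> {set V}).
Variable P : V -> {ffun V -> A} -> A -> R.
Hypotheses (acyc : acyclic pa) (cpd : cpd_family pa P).
Implicit Types (alpha : V -> A -> R) (x y w : {ffun V -> A}) (e : V -> pred A).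

Definition cpd_at alpha v x : A -> R := if is_src pa v then alpha v else P v x.

Lemma bn_lawE alpha x : bn_law pa alpha P x = \prod_v cpd_at alpha v x (x v).
Proof.
rewrite /bn_law [RHS](bigID (is_src pa)) /=; congr (_ * _).
  by apply: eq_bigr => v sv; rewrite /cpd_at sv.
by apply: eq_bigr => v /negbTE nv; rewrite /cpd_at nv.
Qed.

Lemma cpd_at_local alpha v x y :
  (forall u, u \in pa v -> x u = y u) -> cpd_at alpha v x =1 cpd_at alpha v y.
Proof.
rewrite /cpd_at; case: ifP => // /negbT nv xy c.
by have [P_loc _ _] := cpd nv; apply: P_loc.
Qed.

Lemma cpd_at_upd alpha v x c : cpd_at alpha v (upd x v c) =1 cpd_at alpha v x.
Proof.
by apply: cpd_at_local => u u_pa; rewrite upd_other // (in_pa_neq acyc u_pa).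
Qed.

Lemma cpd_at_ge0 alpha v x c : init_distr pa alpha -> 0 <= cpd_at alpha v x c.
Proof.
rewrite /cpd_at => ia; case: ifP => [sv|/negbT nv]; first by case: (ia v sv).
by case: (cpd nv).
Qed.

Lemma sum_cpd_at alpha v x : init_distr pa alpha -> \sum_c cpd_at alpha v x c = 1.
Proof.
rewrite /cpd_at => ia; case: ifP => [sv|/negbT nv]; first by case: (ia v sv).
by case: (cpd nv).
Qed.

Definition ind_kernel alpha e v x : R := (e v (x v))%:R * cpd_at alpha v x (x v).

Lemma ind_kernel_local alpha e : pa_local pa (ind_kernel alpha e).
Proof. by move=> u x y xy pa_xy; rewrite /ind_kernel xy (cpd_at_local _ pa_xy). Qed.

Lemma ind_kernel_neq0 alpha e v x : ind_kernel alpha e v x != 0 -> e v (x v).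
Proof. by rewrite /ind_kernel; case: (e v (x v)); rewrite ?mul0r ?eqxx. Qed.

Lemma sum_ind_kernel_upd alpha e v x :
  \sum_c ind_kernel alpha e v (upd x v c) = \sum_(c | e v c) cpd_at alpha v x c.
Proof.
rewrite [RHS]big_mkcond; apply: eq_bigr => c _.
by rewrite /ind_kernel upd_same cpd_at_upd; case: (e v c); rewrite ?mul1r ?mul0r.
Qed.

Lemma prob_coord_event alpha e :
  prob (bn_law pa alpha P) (fun x => [forall u, e u (x u)]) =
  \sum_x \prod_u ind_kernel alpha e u x.
Proof.
rewrite /prob big_mkcond; apply: eq_bigr => x _.
rewrite big_split /= prodr_nat_bool bn_lawE.
by case: [forall u, _]; rewrite ?mul1r ?mul0r.
Qed.

Lemma prob_child_event alpha v (S : pred A) e Q :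
  init_distr pa alpha -> ~~ is_src pa v ->
  (forall x, (forall p, p \in pa v -> e p (x p)) -> \sum_(c | S c) P v x c = Q) ->
  prob (bn_law pa alpha P) [pred x : {ffun V -> A} | S (x v) && [forall u in pa v, e u (x u)]] =
  Q * prob (bn_law pa alpha P) (fun x => [forall u in pa v, e u (x u)]).
Proof.
move=> ia nv sumQ.
have [x0 _|T0] := pickP (@predT {ffun V -> A}); last first.
  by rewrite /prob !big_pred0 ?mulr0 // => x; have := T0 x.
pose ePa u := if u \in pa v then e u else predT.
pose eS u := if u == v then S else ePa u.
have -> : prob (bn_law pa alpha P) (fun x => [forall u in pa v, e u (x u)]) =
          prob (bn_law pa alpha P) (fun x => [forall u, ePa u (x u)]).
  by apply: eq_bigl => x; apply: forall_in_coord.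
have -> : prob (bn_law pa alpha P)
            [pred x : {ffun V -> A} | S (x v) && [forall u in pa v, e u (x u)]] =
          prob (bn_law pa alpha P) (fun x => [forall u, eS u (x u)]).
  apply: eq_bigl => x; rewrite /= forall_in_coord.
  by apply: (@forall_coord_at _ _ v S ePa) => a; rewrite /ePa ifN //; apply: notin_pa.
rewrite !prob_coord_event.
set D := [set u | connect (edge pa) v u].
have D_cl : desc_closed pa D by apply: desc_closed_desc.
have vD : v \in D by rewrite inE connect0.
have D_pa u : u \in D -> u \notin pa v by rewrite inE; apply: desc_notin_pa.
rewrite (sum_prod_elim acyc (s := fun u => if u == v then Q else 1) x0
           (ind_kernel_local alpha eS) D_cl); last first.
  move=> u x uD nz; rewrite sum_ind_kernel_upd /eS /ePa (negbTE (D_pa u uD)).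
  case: (eqVneq u v) nz => [-> nz|_ _]; last exact: sum_cpd_at.
  rewrite /cpd_at (negbTE nv); apply: sumQ => p p_pa.
  by have := ind_kernel_neq0 (nz p p_pa); rewrite /eS /ePa p_pa (negbTE (in_pa_neq acyc p_pa)).
rewrite (sum_prod_elim acyc (s := fun=> 1) x0 (ind_kernel_local alpha ePa) D_cl); last first.
  by move=> u x uD _; rewrite sum_ind_kernel_upd /ePa (negbTE (D_pa u uD)); apply: sum_cpd_at.
rewrite big1_eq mul1r (big_setD1 _ vD) eqxx big1 => [|u /setD1P[/negbTE -> //]].
congr (_ * _); first exact: mulr1.
apply: eq_bigr => x _; apply: eq_bigr => u uD.
by rewrite /ind_kernel /eS /= ifN //; apply: contraNneq uD => ->.
Qed.

Lemma condprob_child alpha v (S : pred A) e Q :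
  init_distr pa alpha -> ~~ is_src pa v ->
  (forall x, (forall p, p \in pa v -> e p (x p)) -> \sum_(c | S c) P v x c = Q) ->
  prob (bn_law pa alpha P) (fun x => [forall u in pa v, e u (x u)]) != 0 ->
  condprob (bn_law pa alpha P) (fun x => S (x v)) (fun x => [forall u in pa v, e u (x u)]) = Q.
Proof. by move=> ia nv sumQ pE; rewrite /condprob (prob_child_event ia nv sumQ) mulfK. Qed.

Section Aggregation.
Variables (B : finType) (f : A -> B).

Definition agg_cpd v x b := \sum_(c | f c == b) P v x c.

Lemma condprob_Xpa_eq alpha v w b :
  init_distr pa alpha -> ~~ is_src pa v ->
  prob (bn_law pa alpha P) (Xpa_eq pa v w) != 0 ->
  condprob (bn_law pa alpha P) (Uv_eq f v b) (Xpa_eq pa v w) = agg_cpd v w b.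
Proof.
move=> ia nv pw.
apply: (condprob_child (S := fun c => f c == b) (e := fun u a => a == w u)) => // x xw.
have [P_loc _ _] := cpd nv; apply: eq_bigr => c _; apply: P_loc => u /xw /eqP //.
Qed.

Hypothesis agg_cpd_fimg : forall v, ~~ is_src pa v -> forall x y,
  (forall u, u \in pa v -> f (x u) = f (y u)) -> forall b, agg_cpd v x b = agg_cpd v y b.

Lemma condprob_Upa_eq alpha v b (bb : {ffun V -> B}) w :
  init_distr pa alpha -> ~~ is_src pa v -> (forall u, u \in pa v -> f (w u) = bb u) ->
  prob (bn_law pa alpha P) (Upa_eq f pa v bb) != 0 ->
  condprob (bn_law pa alpha P) (Uv_eq f v b) (Upa_eq f pa v bb) = agg_cpd v w b.
Proof.
move=> ia nv w_bb pbb.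
apply: (condprob_child (S := fun c => f c == b) (e := fun u a => f a == bb u)) => // x x_bb.
by apply: agg_cpd_fimg => // u u_pa; rewrite w_bb // (eqP (x_bb u u_pa)).
Qed.

Lemma condprob_Upa_eq_indep alpha1 alpha2 :
  init_distr pa alpha1 -> init_distr pa alpha2 ->
  forall v, ~~ is_src pa v -> forall (b : B) (bb : {ffun V -> B}),
  0 < prob (bn_law pa alpha1 P) (Upa_eq f pa v bb) ->
  0 < prob (bn_law pa alpha2 P) (Upa_eq f pa v bb) ->
  condprob (bn_law pa alpha1 P) (Uv_eq f v b) (Upa_eq f pa v bb) =
  condprob (bn_law pa alpha2 P) (Uv_eq f v b) (Upa_eq f pa v bb).
Proof.
move=> ia1 ia2 v nv b bb p1 p2.
have [x /forall_inP x_bb] := prob_neq0_ex (lt0r_neq0 p1).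
have x_pa u : u \in pa v -> f (x u) = bb u by move=> /x_bb /eqP.
by rewrite (condprob_Upa_eq b ia1 nv x_pa) ?(condprob_Upa_eq b ia2 nv x_pa) ?lt0r_neq0.
Qed.

Lemma bn_U_factorises (g : B -> A) (gK : cancel g f) alpha :
  init_distr pa alpha -> U_factorises f pa (bn_law pa alpha P).
Proof.
move=> ia; pose wit (bb : {ffun V -> B}) := [ffun u => g (bb u)].
have agg_at_fimg v x y : (forall u, u \in pa v -> f (x u) = f (y u)) -> forall b,
    \sum_(c | f c == b) cpd_at alpha v x c = \sum_(c | f c == b) cpd_at alpha v y c.
  by rewrite /cpd_at; case: ifP => // /negbT nv xy b; apply: agg_cpd_fimg.
exists (fun v bb b => \sum_(c | f c == b) cpd_at alpha v (wit bb) c); split.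
- move=> v bb bb' bb_eq b; apply: eq_bigr => c _; apply: cpd_at_local => u u_pa.
  by rewrite !ffunE bb_eq.
- by move=> v bb b; apply: sumr_ge0 => c _; apply: cpd_at_ge0.
- by move=> v bb; rewrite -(sum_cpd_at v (wit bb) ia) (partition_big f predT).
move=> bb; rewrite (prob_coord_event _ (fun u a => f a == bb u)).
have setT_cl : desc_closed pa [set: V] by move=> u p _ _; rewrite inE.
rewrite (sum_prod_elim acyc (s := fun v => \sum_(c | f c == bb v) cpd_at alpha v (wit bb) c)
           (wit bb) (ind_kernel_local _ _) setT_cl); last first.
  move=> u x _ nz; rewrite sum_ind_kernel_upd; apply: agg_at_fimg => p p_pa.
  by rewrite ffunE gK; apply/eqP; apply: (ind_kernel_neq0 (nz p p_pa)).
rewrite (big_pred1 (wit bb)) => [|x]; last first.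
  by apply/forall_inP/eqP => [x_bb|-> //]; apply/ffunP => u; apply/eqP/x_bb; rewrite inE.
rewrite [X in _ * X]big_pred0 => [|u]; last by rewrite in_setT.
by rewrite mulr1; apply: eq_bigl => u; rewrite in_setT.
Qed.

End Aggregation.

End BayesNet.

Theorem mainTheorem11 (R : realFieldType) (V A B : finType)
  (pa : V -> {set V}) (alpha0 : V -> A -> R) (P : V -> {ffun V -> A} -> A -> R)
  (f : A -> B) :
  acyclic pa ->
  init_distr pa alpha0 ->
  cpd_family pa P ->
  (forall x : {ffun V -> A}, 0 < bn_law pa alpha0 P x) ->
  (forall b : B, exists a : A, f a = b) ->
  (forall v, ~~ is_src pa v -> forall w w' : {ffun V -> A},
     (forall u, u \in pa v -> f (w u) = f (w' u)) -> forall b : B,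
     condprob (bn_law pa alpha0 P) (Uv_eq f v b) (Xpa_eq pa v w) =
     condprob (bn_law pa alpha0 P) (Uv_eq f v b) (Xpa_eq pa v w')) ->
  D3 f pa P /\
  (forall v, ~~ is_src pa v -> forall (w : {ffun V -> A}) (b : B) alpha,
     init_distr pa alpha ->
     0 < prob (bn_law pa alpha P) (Upa_eq f pa v (fimg f w)) ->
     condprob (bn_law pa alpha P) (Uv_eq f v b) (Upa_eq f pa v (fimg f w)) =
     condprob (bn_law pa alpha0 P) (Uv_eq f v b) (Xpa_eq pa v w)).
Proof.
move=> acyc ia0 cpd law0_gt0 f_surj Xpa_indep.
have Xpa_neq0 v w : prob (bn_law pa alpha0 P) (Xpa_eq pa v w) != 0.
  by rewrite lt0r_neq0 // (prob_gt0 (x := w) law0_gt0) //; apply/forall_inP.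
have condXE v w b := @condprob_Xpa_eq _ _ _ _ _ acyc cpd _ f _ v w b ia0.
have agg_fimg v : ~~ is_src pa v -> forall w w' : {ffun V -> A},
    (forall u, u \in pa v -> f (w u) = f (w' u)) ->
    forall b, agg_cpd P f v w b = agg_cpd P f v w' b.
  by move=> nv w w' ww' b; rewrite -!condXE ?Xpa_neq0 //; apply: Xpa_indep.
have [g gK] : {g : B -> A | cancel g f}.
  have f_surjb b : exists a, f a == b by have [a <-] := f_surj b; exists a.
  by exists (fun b => xchoose (f_surjb b)) => b; apply/eqP/(xchooseP (f_surjb b)).
split; first split.
- by move=> alpha; apply: (bn_U_factorises acyc cpd agg_fimg gK).
- exact: (condprob_Upa_eq_indep acyc cpd agg_fimg).
move=> v nv w b alpha ia pw; rewrite condXE ?Xpa_neq0 //.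
by apply: (condprob_Upa_eq acyc cpd agg_fimg) => // [u _|]; rewrite ?ffunE ?lt0r_neq0.
Qed.
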